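(* Let $L\in(\Sigma^4_{2,8})^\star$, $L\neq0$, and let $F=\langle L,q(a,b,c)^4\rangle\in\mathbb{R}[a,b,c]_4$. Then $F$ does not vanish at any real point $\xi=(\xi_1:\xi_2:\xi_3)\in\mathbb{P}^2(\mathbb{R})$ whose associated binary quadratic form $\xi_1x^2+\xi_2xy+\xi_3y^2$ is (positive or negative) definite.
   Context: Apolarity pairing on $\mathbb{R}[x,y]$: $\langle x^{\alpha_1}y^{\alpha_2},x^{\beta_1}y^{\beta_2}\rangle=\frac{\beta_1!\beta_2!}{\alpha_1!\alpha_2!}x^{\beta_1-\alpha_1}y^{\beta_2-\alpha_2}$ if $\alpha_i\le\beta_i$, and $0$ otherwise, extended bilinearly; for $L,f\in\mathbb{R}[x,y]_8$ this is a real number. $\Sigma^4_{2,8}\subset\mathbb{R}[x,y]_8$ is the cone of finite sums of fourth powers of real binary quadratic forms and $(\Sigma^4_{2,8})^\star=\{L\in\mathbb{R}[x,y]_8:\langle L,q^4\rangle\ge0\ \forall q\in\mathbb{R}[x,y]_2\}$. With variables $a,b,c$, $q(a,b,c)=ax^2+bxy+cy^2$ and $\langle L,q(a,b,c)^4\rangle\in\mathbb{R}[a,b,c]_4$ is computed in $x,y$ treating $a,b,c$ as scalars. *)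

From HB Require Import structures.
From mathcomp Require Import all_boot all_order all_algebra.
From mathcomp Require Import Rstruct.
Set Implicit Arguments. Unset Strict Implicit. Unset Printing Implicit Defensive.
Import Order.TTheory GRing.Theory Num.Theory.
Local Open Scope ring_scope.

(* A binary form f(x,y) of degree 8 is encoded by the univariate polynomial
   f(t,1) : {poly R} of size <= 9; its coefficient f`_i is the coefficient of
   the monomial x^i y^(8-i). *)
Definition octic (f : {poly Rdefinitions.R}) : Prop := (size f <= 9)%N.

(* Apolarity pairing of two monomials x^i y^(8-i) and x^j y^(8-j) of degree 8:
   (beta1! beta2!)/(alpha1! alpha2!) x^(beta1-alpha1) y^(beta2-alpha2) if alpha <= beta
   componentwise, 0 otherwise (the remaining monomial has degree 0, i.e. is 1). *)
Definition apolar_mon8 (i j : nat) : Rdefinitions.R :=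
  if (i <= j)%N && (8 - i <= 8 - j)%N
  then ((j`! * (8 - j)`!)%:R / (i`! * (8 - i)`!)%:R)
  else 0.

Definition apolar8 (L f : {poly Rdefinitions.R}) : Rdefinitions.R :=
  \sum_(i < 9) \sum_(j < 9) L`_i * f`_j * apolar_mon8 i j.

(* q(a,b,c) = a x^2 + b x y + c y^2, dehomogenized at y = 1. *)
Definition quad (a b c : Rdefinitions.R) : {poly Rdefinitions.R} :=
  a *: 'X^2 + b *: 'X + c%:P.

Definition in_dual_Sigma4 (L : {poly Rdefinitions.R}) : Prop :=
  octic L /\ forall a b c : Rdefinitions.R, 0 <= apolar8 L (quad a b c ^+ 4).

(* F = <L, q(a,b,c)^4> in R[a,b,c]_4, evaluated at (a,b,c) (computed treating
   a, b, c as scalars). *)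
Definition Feval (L : {poly Rdefinitions.R}) (a b c : Rdefinitions.R) : Rdefinitions.R :=
  apolar8 L (quad a b c ^+ 4).

Definition definite_quad (a b c : Rdefinitions.R) : Prop :=
  (forall x y : Rdefinitions.R, (x, y) != (0, 0) -> 0 < a * x ^+ 2 + b * x * y + c * y ^+ 2)
  \/
  (forall x y : Rdefinitions.R, (x, y) != (0, 0) -> a * x ^+ 2 + b * x * y + c * y ^+ 2 < 0).

From mathcomp Require Import all_boot all_order all_algebra.
From mathcomp Require Import Rstruct.
From mathcomp Require Import ring lra zify.
Set Implicit Arguments. Unset Strict Implicit. Unset Printing Implicit Defensive.
Import Order.TTheory GRing.Theory Num.Theory.
Local Open Scope ring_scope.

(* In degree 8 the apolarity pairing is the plain dot product of coefficient
   vectors, so L is a linear functional that is nonnegative on every q^4, in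
   particular on every eighth power (s x + t y)^8 = ((s x + t y)^2)^4.
   Completing the square, a definite q is, up to sign, s^2 (x + h y)^2 + t^2 y^2,
   i.e. the image of x^2 + y^2 under an invertible linear substitution.
   Transporting L along that substitution yields a functional M, still
   nonnegative on eighth powers of linear forms, with <M, (x^2 + y^2)^4> = F(q).
   Since (x^2 + y^2)^4 is an interior point of the cone spanned by eighth powers
   of linear forms, F(q) = 0 forces M = 0, hence L = 0. *)

Section Pairings.
Variable F : comPzRingType.

(* For M j the coefficient of x^j y^(n-j), this is <M, (s x + t y)^n>. *)
Definition binom_pairing (n : nat) (M : nat -> F) (s t : F) : F :=
  \sum_(j < n.+1) 'C(n, j)%:R * s ^+ j * t ^+ (n - j) * M j.

(* <shift_coef l h, g(x, y)> = <l, g(x + h y, y)>. *)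
Definition shift_coef (l : nat -> F) (h : F) (j : nat) : F :=
  \sum_(k < j.+1) 'C(j, k)%:R * h ^+ (j - k) * l k.

(* <M, (x^2 + y^2)^4>. *)
Definition pair_circle4 (M : nat -> F) : F := \sum_(k < 5) 'C(4, k)%:R * M k.*2.

Definition quad4_coefs (a b c : F) : seq F :=
  [:: c^+4; 4*b*c^+3; 6*b^+2*c^+2 + 4*a*c^+3; 4*b^+3*c + 12*a*b*c^+2;
      b^+4 + 12*a*b^+2*c + 6*a^+2*c^+2; 4*a*b^+3 + 12*a^+2*b*c;
      6*a^+2*b^+2 + 4*a^+3*c; 4*a^+3*b; a^+4].

Definition pair_quad4 (l : nat -> F) (a b c : F) : F :=
  \sum_(i < 9) l i * (quad4_coefs a b c)`_i.

Lemma binom_pairing_scale n M (u v s t : F) :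
  binom_pairing n (fun j => u ^+ j * v ^+ (n - j) * M j) s t
  = binom_pairing n M (s * u) (t * v).
Proof. by apply: eq_bigr => j _; rewrite !exprMn; ring. Qed.

Lemma shift_coef_eq0 l h n :
  (forall j, (j < n)%N -> shift_coef l h j = 0) -> forall j, (j < n)%N -> l j = 0.
Proof.
elim: n => [//|n IHn] shift0 j; rewrite ltnS leq_eqVlt => /predU1P[->|lt_jn]; last first.
  by apply: IHn lt_jn => i lt_in; apply/shift0/ltnW.
have l_lt i : (i < n)%N -> l i = 0 by apply: IHn => k lt_kn; apply/shift0/ltnW.
have := shift0 n (ltnSn n); rewrite /shift_coef big_ord_recr /= binn subnn expr0 !mul1r.
by rewrite big1 ?add0r // => i _; rewrite l_lt ?mulr0.
Qed.

Lemma binom_pairing8E M s t :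
  binom_pairing 8 M s t =
  t^+8 * M 0%N + 8 * s * t^+7 * M 1%N + 28 * s^+2 * t^+6 * M 2%N
  + 56 * s^+3 * t^+5 * M 3%N + 70 * s^+4 * t^+4 * M 4%N + 56 * s^+5 * t^+3 * M 5%N
  + 28 * s^+6 * t^+2 * M 6%N + 8 * s^+7 * t * M 7%N + s^+8 * M 8%N.
Proof. by rewrite /binom_pairing !big_ord_recr big_ord0 /= /binomial /subn /=; ring. Qed.

Lemma pair_circle4E M :
  pair_circle4 M = M 0%N + 4 * M 2%N + 6 * M 4%N + 4 * M 6%N + M 8%N.
Proof. by rewrite /pair_circle4 !big_ord_recr big_ord0 /= /binomial /=; ring. Qed.

Lemma pair_quad4_opp l a b c : pair_quad4 l (- a) (- b) (- c) = pair_quad4 l a b c.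
Proof. by rewrite /pair_quad4 !big_ord_recr !big_ord0 /=; ring. Qed.

(* The form is (u x + (u h + v) y)^2. *)
Lemma pair_quad4_sqr l h u v :
  pair_quad4 l (u ^+ 2) (2 * u * (u * h + v)) ((u * h + v) ^+ 2)
  = binom_pairing 8 (shift_coef l h) u v.
Proof.
rewrite /pair_quad4 /binom_pairing /shift_coef !big_ord_recr !big_ord0 /=.
by rewrite /binomial /subn /=; ring.
Qed.

(* The form is s^2 (x + h y)^2 + t^2 y^2. *)
Lemma pair_quad4_diag l h s t :
  pair_quad4 l (s ^+ 2) (2 * s ^+ 2 * h) (s ^+ 2 * h ^+ 2 + t ^+ 2)
  = pair_circle4 (fun j => s ^+ j * t ^+ (8 - j) * shift_coef l h j).
Proof.
rewrite /pair_quad4 /pair_circle4 /shift_coef !big_ord_recr !big_ord0 /=.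
by rewrite /binomial /subn /=; ring.
Qed.

End Pairings.

Section RealField.
Variable F : realFieldType.

(* Evaluating at these twelve points gives, for each coefficient, a linear
   certificate that (x^2 + y^2)^4 is interior to the cone of eighth powers. *)
Lemma binom_pairing_circle4_eq0 (M : nat -> F) :
  (forall s t, 0 <= binom_pairing 8 M s t) -> pair_circle4 M = 0 ->
  forall j, (j < 9)%N -> M j = 0.
Proof.
move=> M_ge0; rewrite pair_circle4E => circle0 j lt_j9.
have := M_ge0 1 0; have := M_ge0 0 1; have := M_ge0 1 1; have := M_ge0 1 (-1).
have := M_ge0 4 1; have := M_ge0 4 (-1); have := M_ge0 1 4; have := M_ge0 1 (-4).
have := M_ge0 2 1; have := M_ge0 2 (-1); have := M_ge0 1 2; have := M_ge0 1 (-2).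
rewrite !binom_pairing8E => *.
by move: j lt_j9; do 9 (case=> [_|]; first by lra).
Qed.

Lemma posdef_quad_coef (a b c : F) :
  (forall x y, (x, y) != (0, 0) -> 0 < a * x ^+ 2 + b * x * y + c * y ^+ 2) ->
  0 < a /\ 0 < 4 * a * c - b ^+ 2.
Proof.
move=> q_gt0; have a_gt0 : 0 < a.
  by have := q_gt0 1 0; rewrite xpair_eqE oner_eq0 expr1n expr0n !mulr0 !addr0 mulr1; apply.
split=> //; rewrite -(pmulr_rgt0 _ a_gt0).
have -> : a * (4 * a * c - b ^+ 2)
          = a * b ^+ 2 + b * b * - (2 * a) + c * (- (2 * a)) ^+ 2 by ring.
by apply: q_gt0; rewrite xpair_eqE oppr_eq0 mulf_eq0 pnatr_eq0 (gt_eqF a_gt0) andbF.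
Qed.

End RealField.

Section RealClosedField.
Variable F : rcfType.

Lemma quad_complete_square (a b c : F) : 0 < a -> 0 < 4 * a * c - b ^+ 2 ->
  exists s t h : F,
    [/\ s != 0, t != 0, a = s ^+ 2, b = 2 * s ^+ 2 * h & c = s ^+ 2 * h ^+ 2 + t ^+ 2].
Proof.
move=> a_gt0 disc_gt0; have a_neq0 : a != 0 by rewrite gt_eqF.
have d_gt0 : 0 < (4 * a * c - b ^+ 2) / (4 * a) by rewrite divr_gt0 // mulr_gt0.
exists (Num.sqrt a), (Num.sqrt ((4 * a * c - b ^+ 2) / (4 * a))), (b / (2 * a)).
rewrite !sqr_sqrtr ?ltW // !gt_eqF ?sqrtr_gt0 //.
by split=> //; field; rewrite ?mulf_neq0 ?pnatr_eq0.
Qed.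

Lemma pair_quad4_posdef_eq0 (l : nat -> F) a b c :
  (forall a b c, 0 <= pair_quad4 l a b c) -> 0 < a -> 0 < 4 * a * c - b ^+ 2 ->
  pair_quad4 l a b c = 0 -> forall i, (i < 9)%N -> l i = 0.
Proof.
move=> l_ge0 a_gt0 disc_gt0.
have [s [t [h [s_neq0 t_neq0 -> -> ->]]]] := quad_complete_square a_gt0 disc_gt0.
rewrite pair_quad4_diag => circle0; set M := fun j => _ in circle0.
have M_ge0 u v : 0 <= binom_pairing 8 M u v.
  by rewrite binom_pairing_scale -pair_quad4_sqr; apply: l_ge0.
apply: (@shift_coef_eq0 _ _ h) => j /(binom_pairing_circle4_eq0 M_ge0 circle0) /eqP.
by rewrite /M !mulf_eq0 !expf_eq0 (negPf s_neq0) (negPf t_neq0) !andbF => /eqP.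
Qed.

End RealClosedField.

Notation R := Rdefinitions.R.

Lemma apolar_mon8_diag (i j : 'I_9) : apolar_mon8 i j = (i == j)%:R.
Proof.
rewrite /apolar_mon8; case: (eqVneq i j) => [->|nij].
  by rewrite !leqnn mulfV // pnatr_eq0 muln_eq0 negb_or -!lt0n !fact_gt0.
case: ifP => // /andP[le_ij le_ji]; case/eqP: nij; apply: val_inj.
by have := ltn_ord i; have := ltn_ord j; rewrite /=; lia.
Qed.

Lemma apolar8_dot L f : apolar8 L f = \sum_(i < 9) L`_i * f`_i.
Proof.
apply: eq_bigr => i _; rewrite (bigD1 i) //= big1 ?addr0.
  by rewrite apolar_mon8_diag eqxx mulr1.
by move=> j nji; rewrite apolar_mon8_diag eq_sym (negPf nji) mulr0.
Qed.

Lemma quad4E (a b c : R) : quad a b c ^+ 4 = Poly (quad4_coefs a b c).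
Proof.
rewrite /quad /quad4_coefs /= !cons_poly_def mul0r add0r -!mul_polyC.
by rewrite !rmorphD !rmorphM /=; ring.
Qed.

Lemma FevalE L a b c : Feval L a b c = pair_quad4 (fun i => L`_i) a b c.
Proof.
by rewrite /Feval apolar8_dot quad4E; apply: eq_bigr => i _; rewrite coef_Poly.
Qed.

Lemma pair_quad4_definite_eq0 (l : nat -> R) a b c :
  (forall a b c, 0 <= pair_quad4 l a b c) -> definite_quad a b c ->
  pair_quad4 l a b c = 0 -> forall i, (i < 9)%N -> l i = 0.
Proof.
move=> l_ge0 [q_gt0|q_lt0].
  by have [] := posdef_quad_coef q_gt0; apply: pair_quad4_posdef_eq0.
have [] : 0 < - a /\ 0 < 4 * - a * - c - (- b) ^+ 2.
  apply: posdef_quad_coef => x y /q_lt0 q_neg.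
  have -> : - a * x ^+ 2 + - b * x * y + - c * y ^+ 2
            = - (a * x ^+ 2 + b * x * y + c * y ^+ 2) by ring.
  by rewrite oppr_gt0.
by rewrite -pair_quad4_opp; apply: pair_quad4_posdef_eq0.
Qed.

Theorem mainTheorem11 (L : {poly Rdefinitions.R}) :
  in_dual_Sigma4 L -> L != 0 ->
  forall xi1 xi2 xi3 : Rdefinitions.R,
    (xi1, xi2, xi3) != (0, 0, 0) ->
    definite_quad xi1 xi2 xi3 ->
    Feval L xi1 xi2 xi3 != 0.
Proof.
move=> [size_L L_ge0] L_neq0 a b c _ q_def; apply/eqP; rewrite FevalE => F0.
have F_ge0 a' b' c' : 0 <= pair_quad4 (fun i => L`_i) a' b' c'.
  by rewrite -FevalE; apply: L_ge0.
have coefL0 := pair_quad4_definite_eq0 F_ge0 q_def F0.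
case/eqP: L_neq0; apply/polyP => i; rewrite coef0.
case: (ltnP i 9) => [/coefL0 //|le9i].
by rewrite nth_default // (leq_trans size_L).
Qed.
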